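(* If $\kappa$ is an uncountable cardinal with $\kappa=\kappa^{<\kappa}$, then every non-empty open subset of ${}^\kappa\kappa$ is equal to the image of ${}^\kappa\kappa$ under an injective continuous function ${}^\kappa\kappa\to{}^\kappa\kappa$.
   Context: ${}^\kappa\kappa$ carries the topology whose basic open sets are $N_s=\{x\in{}^\kappa\kappa : s\subseteq x\}$ for $s$ a function from some ordinal $\alpha<\kappa$ to $\kappa$. *)

(* A cardinal kappa is represented as a type K carrying a strict
   well-order lt whose order type is an initial ordinal. *)
From Stdlib Require Import Relations Wellfounded.

Definition injective {A B : Type} (f : A -> B) : Prop :=
  forall x y, f x = f y -> x = y.

Definition strict_well_order (K : Type) (lt : K -> K -> Prop) : Prop :=
  well_founded lt /\
  (forall a b c, lt a b -> lt b c -> lt a c) /\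
  (forall a b, lt a b \/ a = b \/ lt b a).

Definition below {K : Type} (lt : K -> K -> Prop) (a : K) : Type := {b : K | lt b a}.

Definition is_cardinal (K : Type) (lt : K -> K -> Prop) : Prop :=
  strict_well_order K lt /\
  forall a : K, ~ exists f : K -> below lt a, injective f.

Definition uncountable (K : Type) : Prop := ~ exists f : K -> nat, injective f.

(* kappa^{<kappa} = kappa : the set of functions from some ordinal a < kappa
   to kappa injects into kappa (the reverse inequality is trivial) *)
Definition kappa_lt_kappa_eq (K : Type) (lt : K -> K -> Prop) : Prop :=
  exists f : {a : K & (below lt a -> K)} -> K, injective f.

(* generalized Baire space ^kappa kappa: functions K -> K.
   Basic open set N_s for s : a -> K, a < kappa. *)
Definition N_s {K : Type} (lt : K -> K -> Prop) (a : K) (s : below lt a -> K)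
  : (K -> K) -> Prop :=
  fun x => forall b : below lt a, x (proj1_sig b) = s b.

Definition bopen {K : Type} (lt : K -> K -> Prop) (U : (K -> K) -> Prop) : Prop :=
  forall x, U x -> exists (a : K) (s : below lt a -> K),
    N_s lt a s x /\ forall y, N_s lt a s y -> U y.

Definition bcontinuous {K : Type} (lt : K -> K -> Prop) (f : (K -> K) -> (K -> K)) : Prop :=
  forall U, bopen lt U -> bopen lt (fun x => U (f x)).

From Stdlib Require Import Classical ClassicalEpsilon FunctionalExtensionality ProofIrrelevance.

(** The stems x|a (x in U, a least with N_{x|a} contained in U) form a family
    J of prefixes whose basic open sets partition U.  Since kappa^{<kappa} =
    kappa, each s in J has a code in kappa, and ^kappa kappa splits into the
    pieces {x | x(p0) codes s}, s in J.  On the piece of s the map rewrites only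
    an initial segment of some length b_s > |s|, through a bijection (by
    Schroeder-Bernstein) between the prefixes of length b_s coding s and those
    extending s.  So it sends that piece bijectively onto N_s, and each output
    coordinate depends on boundedly many input coordinates. *)

Definition inj_on {A B : Type} (P : A -> Prop) (f : A -> B) : Prop :=
  forall x y, P x -> P y -> f x = f y -> x = y.

Definition bijective_on {A B : Type} (P : A -> Prop) (Q : B -> Prop) (h : A -> B) : Prop :=
  (forall a, P a -> Q (h a)) /\ inj_on P h /\ (forall b, Q b -> exists a, P a /\ h a = b).

Section SchroederBernstein.
Context {A B : Type} (P : A -> Prop) (Q : B -> Prop) (f : A -> B) (g : B -> A).
Hypotheses (f_maps : forall a, P a -> Q (f a)) (g_maps : forall b, Q b -> P (g b))
  (f_inj : inj_on P f) (g_inj : inj_on Q g).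

Definition chained (a : A) : Prop :=
  exists n a0, P a0 /\ (forall b, Q b -> g b <> a0) /\ a = Nat.iter n (fun a => g (f a)) a0.

Lemma iter_maps n a0 : P a0 -> P (Nat.iter n (fun a => g (f a)) a0).
Proof. intro Pa0. induction n as [|n IH]; simpl; auto. Qed.

Lemma chained_step a : chained a -> chained (g (f a)).
Proof. intros (n & a0 & Pa0 & Hout & ->). exists (S n), a0. auto. Qed.

Lemma not_chained_in_range a : P a -> ~ chained a -> exists b, Q b /\ g b = a.
Proof.
  intros Pa Hc. apply NNPP. intro Hr. apply Hc. exists 0, a. repeat split; auto.
  intros b Qb E. apply Hr. eauto.
Qed.

Definition g_inv (a : A) : B := epsilon (inhabits (f a)) (fun b => Q b /\ g b = a).

Lemma g_inv_spec a : P a -> ~ chained a -> Q (g_inv a) /\ g (g_inv a) = a.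
Proof. intros Pa Hc. unfold g_inv. apply epsilon_spec, not_chained_in_range; auto. Qed.

Definition sb_map (a : A) : B :=
  if excluded_middle_informative (chained a) then f a else g_inv a.

Theorem schroeder_bernstein_on : bijective_on P Q sb_map.
Proof.
  unfold sb_map. split; [|split].
  - intros a Pa. destruct excluded_middle_informative as [C|C]; [auto|].
    apply g_inv_spec; auto.
  - intros a1 a2 P1 P2.
    destruct (excluded_middle_informative (chained a1)) as [C1|C1],
      (excluded_middle_informative (chained a2)) as [C2|C2]; intro E.
    + auto.
    + destruct (g_inv_spec a2 P2 C2) as [_ Ea2]. exfalso. apply C2.
      rewrite <- Ea2, <- E. apply chained_step; auto.
    + destruct (g_inv_spec a1 P1 C1) as [_ Ea1]. exfalso. apply C1.
      rewrite <- Ea1, E. apply chained_step; auto.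
    + destruct (g_inv_spec a1 P1 C1) as [_ Ea1], (g_inv_spec a2 P2 C2) as [_ Ea2].
      congruence.
  - intros b Qb. destruct (classic (chained (g b))) as [(n & a0 & Pa0 & Hout & Hg)|C].
    + destruct n as [|n]; simpl in Hg.
      { exfalso. exact (Hout b Qb Hg). }
      apply g_inj in Hg; auto using iter_maps.
      exists (Nat.iter n (fun a => g (f a)) a0). split; [auto using iter_maps|].
      destruct excluded_middle_informative as [_|C]; [auto|].
      exfalso. apply C. exists n, a0. auto.
    + exists (g b). split; [auto|].
      destruct excluded_middle_informative as [C'|_]; [contradiction|].
      destruct (g_inv_spec (g b) (g_maps b Qb) C) as [Qi Ei]. auto.
Qed.

End SchroederBernstein.

Lemma left_inverse_on {A B : Type} (P : A -> Prop) (e : A -> B) :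
  inj_on P e -> (exists a, P a) ->
  exists d : B -> A, (forall b, P (d b)) /\ (forall a, P a -> d (e a) = a).
Proof.
  intros He [a0 Pa0].
  set (spec b a := P a /\ ((exists a', P a' /\ e a' = b) -> e a = b)).
  assert (Hspec : forall b, exists a, spec b a).
  { intro b. destruct (classic (exists a', P a' /\ e a' = b)) as [(a' & Pa' & Ea')|Hn].
    - exists a'. split; auto.
    - exists a0. split; [auto|contradiction]. }
  exists (fun b => epsilon (inhabits a0) (spec b)). split.
  - intro b. exact (proj1 (epsilon_spec (inhabits a0) _ (Hspec b))).
  - intros a Pa. destruct (epsilon_spec (inhabits a0) _ (Hspec (e a))) as [Pd Ed].
    apply He; eauto.
Qed.

Section BaireSpace.
Context {K : Type} (lt : K -> K -> Prop).

Definition prefix : Type := {a : K & below lt a -> K}.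

Definition basic (s : prefix) : (K -> K) -> Prop := N_s lt (projT1 s) (projT2 s).

Definition disjoint_basics (J : prefix -> Prop) : Prop :=
  forall s t y, J s -> J t -> basic s y -> basic t y -> s = t.

Definition restrict (a : K) (x : K -> K) : below lt a -> K := fun c => x (proj1_sig c).

Definition nbhd (a : K) (x : K -> K) : (K -> K) -> Prop := N_s lt a (restrict a x).

Definition splice (a : K) (w : below lt a -> K) (x : K -> K) : K -> K :=
  fun c => match excluded_middle_informative (lt c a) with
           | left h => w (exist _ c h)
           | right _ => x c
           end.

Lemma nbhd_refl a x : nbhd a x x.
Proof. intro c. reflexivity. Qed.

Lemma N_s_nbhd a s x y : N_s lt a s x -> nbhd a x y -> N_s lt a s y.
Proof. intros Hx Hy c. rewrite (Hy c). apply Hx. Qed.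

Lemma restrict_nbhd a x y : nbhd a x y -> restrict a y = restrict a x.
Proof. intro H. apply functional_extensionality, H. Qed.

Lemma eq_of_restrict a x y :
  restrict a x = restrict a y -> (forall c, ~ lt c a -> x c = y c) -> x = y.
Proof.
  intros Hr Ho. apply functional_extensionality. intro c.
  destruct (classic (lt c a)) as [h|h]; [|auto].
  exact (f_equal (fun w => w (exist _ c h)) Hr).
Qed.

Lemma splice_below a w x (c : below lt a) : splice a w x (proj1_sig c) = w c.
Proof.
  destruct c as [c h]. unfold splice; simpl.
  destruct excluded_middle_informative as [h'|]; [|contradiction].
  f_equal. f_equal. apply proof_irrelevance.
Qed.

Lemma splice_above a w x c : ~ lt c a -> splice a w x c = x c.
Proof. intro h. unfold splice. destruct excluded_middle_informative; tauto. Qed.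

Lemma restrict_splice a w x : restrict a (splice a w x) = w.
Proof. apply functional_extensionality, splice_below. Qed.

Lemma splice_restrict a x : splice a (restrict a x) x = x.
Proof.
  apply eq_of_restrict with a; [apply restrict_splice|]. intros. apply splice_above; auto.
Qed.

Lemma splice_splice a w w' x : splice a w (splice a w' x) = splice a w x.
Proof.
  apply eq_of_restrict with a; [now rewrite !restrict_splice|].
  intros. now rewrite !splice_above.
Qed.

Lemma splice_eq_inv a w w' x y :
  splice a w x = splice a w' y -> w = w' /\ forall c, ~ lt c a -> x c = y c.
Proof.
  intro E. split.
  - now rewrite <- (restrict_splice a w x), E, restrict_splice.
  - intros c h. now rewrite <- (splice_above a w x c h), E, splice_above.
Qed.

Lemma splice_nbhd a b w x y : nbhd a x y -> nbhd a (splice b w x) (splice b w y).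
Proof.
  intros H [c h]. unfold restrict, splice; simpl.
  destruct excluded_middle_informative; [reflexivity|]. exact (H (exist _ c h)).
Qed.

Section WellOrder.
Hypotheses (lt_wf : well_founded lt) (lt_trans : forall a b c, lt a b -> lt b c -> lt a c)
  (lt_trichotomy : forall a b, lt a b \/ a = b \/ lt b a).

Lemma lt_irrefl a : ~ lt a a.
Proof.
  induction a as [a IH] using (well_founded_induction lt_wf). intro H. exact (IH a H H).
Qed.

Definition least (P : K -> Prop) (a : K) : Prop := P a /\ forall b, lt b a -> ~ P b.

Lemma least_exists P : (exists a, P a) -> exists a, least P a.
Proof.
  intros [a Pa]. apply NNPP. intro Hn. revert Pa.
  induction a as [a IH] using (well_founded_induction lt_wf). intro Pa.
  apply Hn. exists a. split; [auto|]. intros b Hb Pb. exact (IH b Hb Pb).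
Qed.

Lemma least_unique P a b : least P a -> least P b -> a = b.
Proof.
  intros [Pa Ha] [Pb Hb].
  destruct (lt_trichotomy a b) as [H|[H|H]]; [exfalso; exact (Hb a H Pa)|exact H|].
  exfalso. exact (Ha b H Pb).
Qed.

Lemma nbhd_mono a b x y : lt a b -> nbhd b x y -> nbhd a x y.
Proof. intros Hab H [c h]. exact (H (exist _ c (lt_trans _ _ _ h Hab))). Qed.

Lemma strict_upper_bound (no_max : forall a, exists b, lt a b) a b :
  exists c, lt a c /\ lt b c.
Proof.
  destruct (lt_trichotomy a b) as [H|[<-|H]].
  - destruct (no_max b) as [c Hc]. eauto.
  - destruct (no_max a) as [c Hc]. eauto.
  - destruct (no_max a) as [c Hc]. eauto.
Qed.

Section NoLargest.
Hypotheses (card_below : forall a : K, ~ exists f : K -> below lt a, injective f)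
  (code : prefix -> K) (code_inj : injective code) (nontrivial : ~ forall a b : K, a = b).

(* If m were largest, [k |-> code (m, const k)] would inject K into K minus
   the code [p] of a shorter prefix; moving the value m to p then lands below m. *)
Lemma no_largest m : exists b, lt m b.
Proof.
  apply NNPP. intro Hm.
  assert (below_m : forall k, k <> m -> lt k m).
  { intros k Hk. destruct (lt_trichotomy k m) as [H|[H|H]]; [auto|contradiction|].
    exfalso. eauto. }
  destruct (classic (exists c, lt c m)) as [[c Hc]|Hnone].
  2: { apply nontrivial. intros a b.
       assert (Hall : forall k, k = m).
       { intro k. apply NNPP. intro Hk. apply Hnone. eauto. }
       now rewrite (Hall a), (Hall b). }
  set (cst k := code (existT (fun a => below lt a -> K) m (fun _ => k))).
  set (p := code (existT (fun a => below lt a -> K) c (fun _ => m))).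
  assert (cst_inj : injective cst).
  { intros k k' E. apply code_inj, inj_pairT2 in E.
    exact (f_equal (fun w => w (exist _ c Hc)) E). }
  assert (cst_p : forall k, cst k <> p).
  { intros k E. apply code_inj, (f_equal (@projT1 _ _)) in E. simpl in E. subst c.
    exact (lt_irrefl _ Hc). }
  set (h k := if excluded_middle_informative (cst k = m) then p else cst k).
  assert (h_ne : forall k, h k <> m).
  { intro k. unfold h. destruct excluded_middle_informative as [E|E]; [|exact E].
    intro Ep. apply (cst_p k). congruence. }
  assert (h_inj : injective h).
  { intros k k'. unfold h.
    destruct (excluded_middle_informative (cst k = m)),
      (excluded_middle_informative (cst k' = m)); intro E.
    - apply cst_inj. congruence.
    - exfalso. exact (cst_p k' (eq_sym E)).
    - exfalso. exact (cst_p k E).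
    - apply cst_inj, E. }
  apply (card_below m). exists (fun k => exist _ (h k) (below_m _ (h_ne k))).
  intros k k' E. apply h_inj. exact (f_equal (@proj1_sig _ _) E).
Qed.

End NoLargest.

Section OpenSets.
Variable U : (K -> K) -> Prop.

Definition nbhd_within (a : K) (x : K -> K) : Prop := forall y, nbhd a x y -> U y.

Definition minimal_stem (s : prefix) : Prop :=
  exists x a, least (fun b => nbhd_within b x) a /\ s = existT _ a (restrict a x).

Lemma nbhd_within_nbhd a x y : nbhd a x y -> nbhd_within a x -> nbhd_within a y.
Proof. intros Hxy Hx z Hyz. apply Hx. exact (N_s_nbhd _ _ _ _ Hxy Hyz). Qed.

Lemma least_nbhd_within_nbhd a x y :
  nbhd a x y -> least (fun b => nbhd_within b x) a -> least (fun b => nbhd_within b y) a.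
Proof.
  intros Hxy [Hx Hmin]. split; [exact (nbhd_within_nbhd _ _ _ Hxy Hx)|].
  intros b Hb Hy. apply (Hmin b Hb). apply nbhd_within_nbhd with y; [|exact Hy].
  intro c. symmetry. exact (nbhd_mono _ _ _ _ Hb Hxy c).
Qed.

Lemma minimal_stem_disjoint : disjoint_basics minimal_stem.
Proof.
  intros s t y (x & a & Ha & ->) (x' & a' & Ha' & ->) Hy Hy'.
  assert (a = a') as <-.
  { apply least_unique with (fun b => nbhd_within b y).
    - exact (least_nbhd_within_nbhd _ _ _ Hy Ha).
    - exact (least_nbhd_within_nbhd _ _ _ Hy' Ha'). }
  f_equal. now rewrite <- (restrict_nbhd a x y Hy), (restrict_nbhd a x' y Hy').
Qed.

Hypothesis U_open : bopen lt U.

Lemma open_eq_union_minimal_stems y : U y <-> exists s, minimal_stem s /\ basic s y.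
Proof.
  split.
  - intro Uy. destruct (least_exists (fun b => nbhd_within b y)) as [a Ha].
    { destruct (U_open y Uy) as (a & s & Hs & HsU).
      exists a. intros z Hz. apply HsU. exact (N_s_nbhd _ _ _ _ Hs Hz). }
    exists (existT _ a (restrict a y)). split; [exists y, a; auto|apply nbhd_refl].
  - intros (s & (x & a & [Hx _] & ->) & Hy). exact (Hx y Hy).
Qed.

End OpenSets.

Section Embedding.
Hypothesis no_max : forall a, exists b, lt a b.
Variables (J : prefix -> Prop) (code : prefix -> K).
Hypotheses (J_disjoint : disjoint_basics J) (code_inj : injective code).

Section Coding.
Variables (decode : K -> prefix) (p0 p1 : K).
Hypotheses (decode_J : forall i, J (decode i)) (decode_code : forall s, J s -> decode (code s) = s)
  (p0_lt_p1 : lt p0 p1).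

Definition len (s : prefix) : K := epsilon (inhabits p0) (fun b => lt (projT1 s) b /\ lt p1 b).

Lemma len_spec s : lt (projT1 s) (len s) /\ lt p1 (len s).
Proof. unfold len. apply epsilon_spec, strict_upper_bound, no_max. Qed.

Definition end_slot (s : prefix) : below lt (len s) := exist _ (projT1 s) (proj1 (len_spec s)).

Definition tag_slot (s : prefix) : below lt (len s) := exist _ p1 (proj2 (len_spec s)).

Definition code_slot (s : prefix) : below lt (len s) :=
  exist _ p0 (lt_trans _ _ _ p0_lt_p1 (proj2 (len_spec s))).

Definition widen (s : prefix) (c : below lt (projT1 s)) : below lt (len s) :=
  exist _ (proj1_sig c) (lt_trans _ _ _ (proj2_sig c) (proj1 (len_spec s))).

Definition codes (s : prefix) (w : below lt (len s) -> K) : Prop := decode (w (code_slot s)) = s.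

Definition extends (s : prefix) (t : below lt (len s) -> K) : Prop :=
  forall c, t (widen s c) = projT2 s c.

Definition pad (s : prefix) (w : below lt (len s) -> K) : below lt (len s) -> K :=
  restrict (len s) (splice (projT1 s) (projT2 s) (fun _ => code (existT _ (len s) w))).

Definition tag (s : prefix) (t : below lt (len s) -> K) : below lt (len s) -> K :=
  restrict (len s) (fun c => if excluded_middle_informative (c = p0) then code s
                             else code (existT _ (len s) t)).

Lemma pad_extends s w : extends s (pad s w).
Proof. intro c. exact (splice_below _ _ _ c). Qed.

Lemma pad_inj s : injective (pad s).
Proof.
  intros w w' E. apply (f_equal (fun t => t (end_slot s))) in E.
  unfold pad, restrict in E; simpl in E. rewrite !splice_above in E by apply lt_irrefl.
  exact (inj_pairT2 _ _ _ _ _ (code_inj _ _ E)).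
Qed.

Lemma tag_codes s t : J s -> codes s (tag s t).
Proof.
  intro Js. unfold codes, tag, restrict; simpl.
  destruct excluded_middle_informative as [_|n]; [auto|congruence].
Qed.

Lemma tag_inj s : injective (tag s).
Proof.
  intros t t' E. apply (f_equal (fun w => w (tag_slot s))) in E.
  unfold tag, restrict in E; simpl in E.
  destruct excluded_middle_informative as [E1|_].
  - exfalso. apply (lt_irrefl p0). rewrite <- E1 at 2. exact p0_lt_p1.
  - exact (inj_pairT2 _ _ _ _ _ (code_inj _ _ E)).
Qed.

Definition stem_bij (s : prefix) : (below lt (len s) -> K) -> below lt (len s) -> K :=
  epsilon (inhabits (fun w => w)) (fun h => J s -> bijective_on (codes s) (extends s) h).

Lemma stem_bij_spec s : J s -> bijective_on (codes s) (extends s) (stem_bij s).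
Proof.
  intro Js.
  assert (Hex : exists h, J s -> bijective_on (codes s) (extends s) h).
  { exists (sb_map (codes s) (extends s) (pad s) (tag s)). intros _.
    apply schroeder_bernstein_on.
    - intros w _. apply pad_extends.
    - intros t _. apply tag_codes, Js.
    - intros w w' _ _. apply pad_inj.
    - intros t t' _ _. apply tag_inj. }
  exact (epsilon_spec _ _ Hex Js).
Qed.

Definition embed (x : K -> K) : K -> K :=
  let s := decode (x p0) in splice (len s) (stem_bij s (restrict (len s) x)) x.

Lemma embed_eq x s : decode (x p0) = s -> embed x = splice (len s) (stem_bij s (restrict (len s) x)) x.
Proof. intros <-. reflexivity. Qed.

Lemma restrict_codes x s : decode (x p0) = s -> codes s (restrict (len s) x).
Proof. intros <-. reflexivity. Qed.

Lemma embed_basic x : basic (decode (x p0)) (embed x).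
Proof.
  set (s := decode (x p0)). rewrite (embed_eq x s eq_refl). intro c.
  change (proj1_sig c) with (proj1_sig (widen s c)). rewrite splice_below.
  apply (stem_bij_spec s (decode_J _)), restrict_codes. reflexivity.
Qed.

Lemma embed_injective : injective embed.
Proof.
  intros x y E.
  assert (Es : decode (y p0) = decode (x p0)).
  { apply J_disjoint with (embed x); try apply decode_J; [rewrite E|]; apply embed_basic. }
  rewrite (embed_eq x _ eq_refl), (embed_eq y _ Es) in E.
  apply splice_eq_inv in E as [Ew Eo].
  destruct (stem_bij_spec _ (decode_J (x p0))) as (_ & Hinj & _).
  apply eq_of_restrict with (len (decode (x p0))); [|exact Eo].
  exact (Hinj _ _ (restrict_codes x _ eq_refl) (restrict_codes y _ Es) Ew).
Qed.

Lemma embed_onto s z : J s -> basic s z -> exists x, embed x = z.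
Proof.
  intros Js Hz. destruct (stem_bij_spec s Js) as (_ & _ & Honto).
  destruct (Honto (restrict (len s) z)) as (w & Hw & Ew); [exact Hz|].
  exists (splice (len s) w z).
  assert (Hs : decode (splice (len s) w z p0) = s).
  { change p0 with (proj1_sig (code_slot s)). rewrite splice_below. exact Hw. }
  rewrite (embed_eq _ _ Hs), restrict_splice, Ew, splice_splice. apply splice_restrict.
Qed.

Lemma embed_continuous : bcontinuous lt embed.
Proof.
  intros V HV x Vx. destruct (HV _ Vx) as (a & t & Ht & HtV).
  set (s := decode (x p0)).
  destruct (strict_upper_bound no_max a (len s)) as (M & HaM & HbM).
  exists M, (restrict M x). split; [apply nbhd_refl|]. intros y Hy.
  assert (Hs : decode (y p0) = s).
  { unfold s. f_equal.
    exact (Hy (exist _ p0 (lt_trans _ _ _ (proj2_sig (code_slot s)) HbM))). }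
  apply HtV, N_s_nbhd with (embed x); [exact Ht|]. apply nbhd_mono with M; [exact HaM|].
  rewrite (embed_eq x s eq_refl), (embed_eq y s Hs), (restrict_nbhd _ _ _ (nbhd_mono _ _ _ _ HbM Hy)).
  apply splice_nbhd, Hy.
Qed.

Lemma embed_image : injective embed /\ bcontinuous lt embed /\
  forall y, (exists s, J s /\ basic s y) <-> exists x, embed x = y.
Proof.
  split; [exact embed_injective|split; [exact embed_continuous|]]. intro y. split.
  - intros (s & Js & Hy). exact (embed_onto s y Js Hy).
  - intros [x <-]. exists (decode (x p0)). split; [apply decode_J|apply embed_basic].
Qed.

End Coding.

Theorem disjoint_union_basic_image : (exists s, J s) ->
  exists f : (K -> K) -> (K -> K), injective f /\ bcontinuous lt f /\
    forall y, (exists s, J s /\ basic s y) <-> exists x, f x = y.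
Proof.
  intros [s0 Js0].
  destruct (left_inverse_on J code (fun s t _ _ => code_inj s t) (ex_intro _ s0 Js0))
    as (decode & decode_J & decode_code).
  destruct (no_max (projT1 s0)) as [p1 Hp].
  eexists. exact (embed_image decode (projT1 s0) p1 decode_J decode_code Hp).
Qed.

End Embedding.
End WellOrder.
End BaireSpace.


Theorem proposition1p7 (K : Type) (lt : K -> K -> Prop)
  (Hcard : is_cardinal K lt) (Hunc : uncountable K)
  (Hkk : kappa_lt_kappa_eq K lt)
  (U : (K -> K) -> Prop) (HU : bopen lt U) (Hne : exists x, U x) :
  exists f : (K -> K) -> (K -> K),
    injective f /\ bcontinuous lt f /\
    (forall y, U y <-> exists x, f x = y).
Proof.
  destruct Hcard as [[Hwf [Htr Htri]] Hcd]. destruct Hkk as [code Hcode].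
  (* Uncountability is only used to rule out kappa = 1. *)
  assert (Hmax : forall a, exists b, lt a b).
  { apply (no_largest lt Hwf Htri Hcd code Hcode).
    intro Hall. apply Hunc. exists (fun _ => 0). intros a b _. apply Hall. }
  destruct (disjoint_union_basic_image lt Hwf Htr Htri Hmax (minimal_stem lt U) code
              (minimal_stem_disjoint lt Htr Htri U) Hcode) as (f & Hinj & Hcont & Himg).
  { destruct Hne as [x Ux].
    destruct (proj1 (open_eq_union_minimal_stems lt Hwf U HU x) Ux) as (s & Js & _).
    eauto. }
  exists f. split; [exact Hinj|split; [exact Hcont|]].
  intro y. rewrite (open_eq_union_minimal_stems lt Hwf U HU y). apply Himg.
Qed.
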